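(* Let $G$ be a cubic bipartite connected graph and $K$ a constant. Then $G$ admits a TSP-tour of length at most $K$ if and only if $G$ admits a $\tfrac12$-tour of length $K$.
   Context: Continuous graph model: for a connected simple graph $G$, each edge $uv$ is viewed as a unit-length interval whose endpoints are the vertices $u,v$. $P(G)$ is the set of all points $p(u,v,\lambda)$ for $uv\in E(G)$, $\lambda\in[0,1]$, where $p(u,v,\lambda)=p(v,u,1-\lambda)$, $p(u,v,0)=u$, $p(u,v,1)=v$. A walk is a finite sequence of points $(p_0,\dots,p_z)$ in which any two consecutive points are distinct and lie on a common edge $uv$, say $p_{i-1}=p(u,v,\lambda)$, $p_i=p(u,v,\mu)$; this step has length $|\lambda-\mu|$ and covers all points of that edge between them. The length of a walk is the sum of the lengths of its steps; $d(p,q)$ is the minimum length of a walk from $p$ to $q$. A tour is a walk with $p_0=p_z$; the points of the tour are all points covered by its steps. For $\delta\ge 0$, a $\delta$-tour is a tour $T$ such that every $p\in P(G)$ has distance at most $\delta$ from some point of $T$. A TSP-tour of $G$ is a closed walk in $G$ (a tour all of whose points $p_i$ are vertices) visiting every vertex of $G$; its length is the number of edge traversals. *)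

From mathcomp Require Import all_boot.
From Stdlib Require Import Reals.
Set Implicit Arguments. Unset Strict Implicit. Unset Printing Implicit Defensive.

Section Graph.
Variables (T : finType) (e : rel T).

Definition simple_graph : Prop := symmetric e /\ irreflexive e.
Definition cubic : Prop := forall v : T, #|[pred w | e v w]| = 3.
Definition bipartite : Prop :=
  exists c : T -> bool, forall u v, e u v -> c u != c v.
Definition connected_graph : Prop := forall u v : T, connect e u v.

(** Continuous model: a point p(u,v,lambda) is represented by a triple. *)
Record point := Pt { pu : T; pv : T; pl : R }.

Definition valid_point (p : point) : Prop :=
  e (pu p) (pv p) /\ (0 <= pl p <= 1)%R.

Definition is_vertex (p : point) (x : T) : Prop :=
  (pl p = 0%R /\ pu p = x) \/ (pl p = 1%R /\ pv p = x).

Definition same_point (p q : point) : Prop :=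
  (pu p = pu q /\ pv p = pv q /\ pl p = pl q) \/
  (pu p = pv q /\ pv p = pu q /\ pl p = (1 - pl q)%R) \/
  (exists x, is_vertex p x /\ is_vertex q x).

(** A step from p(u,v,a) to p(u,v,b) along edge uv, with a <> b
    (so the two consecutive points are distinct). *)
Record step := St { su : T; sv : T; sa : R; sb : R }.
Definition valid_step (s : step) : Prop :=
  e (su s) (sv s) /\ (0 <= sa s <= 1)%R /\ (0 <= sb s <= 1)%R /\ sa s <> sb s.
Definition step_start (s : step) : point := Pt (su s) (sv s) (sa s).
Definition step_end (s : step) : point := Pt (su s) (sv s) (sb s).
Definition step_len (s : step) : R := Rabs (sa s - sb s).
Definition step_covers (s : step) (p : point) : Prop :=
  exists t : R, (Rmin (sa s) (sb s) <= t <= Rmax (sa s) (sb s))%R /\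
    same_point p (Pt (su s) (sv s) t).

(** A walk from p to q given by its sequence of steps (the sequence of
    points p_0, ..., p_z is p, the step endpoints, ..., q). *)
Fixpoint is_walk (p q : point) (ws : seq step) : Prop :=
  match ws with
  | [::] => same_point p q
  | s :: ws' => valid_step s /\ same_point p (step_start s) /\ is_walk (step_end s) q ws'
  end.

Definition walk_len (ws : seq step) : R := foldr Rplus 0%R (map step_len ws).

(** d(p,q) <= delta : there is a walk from p to q of length at most delta
    (d is a minimum, so this is equivalent to d(p,q) <= delta). *)
Definition dist_le (p q : point) (delta : R) : Prop :=
  exists ws, is_walk p q ws /\ (walk_len ws <= delta)%R.

Definition is_tour (ws : seq step) : Prop := exists p, valid_point p /\ is_walk p p ws.

Definition tour_covers (ws : seq step) (q : point) : Prop :=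
  exists s, List.In s ws /\ step_covers s q.

Definition delta_tour (delta : R) (ws : seq step) : Prop :=
  is_tour ws /\
  forall p, valid_point p -> exists q, tour_covers ws q /\ dist_le p q delta.

(** TSP-tour: closed walk v0 v1 ... vz = v0 in G visiting all vertices;
    its length is z, the number of edge traversals. *)
Definition TSP_tour (v0 : T) (s : seq T) : Prop :=
  path e v0 s /\ last v0 s = v0 /\ forall x : T, x \in v0 :: s.
Definition TSP_len (s : seq T) : nat := size s.

End Graph.

(* A TSP-tour of length n covers every vertex, and every point of an edge lies within 1/2
   of a vertex; walking back and forth on one edge pads its length to any K >= n.

   Conversely, rotate a 1/2-tour so that it starts at a vertex x0 and contract it onto the
   vertices it touches: this gives a closed vertex walk through all touched vertices, no
   longer than the steps joining two touched vertices.  An untouched vertex v still lies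
   within 1/2 of the tour.  Let D(w) be how far the tour enters the edge wv from w and
   r = 1 - max D the distance from v to the tour; comparing with the point of an edge vw
   at distance (1 - D(w) - r)/2 from v shows D(w) >= r for every neighbour w, so two
   neighbours give D(w1) + D(w2) >= 1, and since the tour is closed it spends at least 2
   on the edges at v.  Every step has a touched end, so these charges are disjoint, and a
   detour of length 2 from a touched neighbour adds v to the vertex walk. *)

From mathcomp Require Import all_boot.
From Stdlib Require Import Reals Lra.
Set Implicit Arguments. Unset Strict Implicit. Unset Printing Implicit Defensive.
Local Open Scope R_scope.

Lemma hasInP (A : Type) (a : pred A) (l : seq A) :
  reflect (exists2 x, List.In x l & a x) (has a l).
Proof.
elim: l => [|x l IH] /=; first by right=> [[]].
case ax: (a x); first by left; exists x => //; left.
apply: (iffP IH) => [[y ly ay]|[y [<-|ly] ay]]; first by exists y => //; right.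
- by rewrite ax in ay.
- by exists y.
Qed.

Lemma In_split_cat (A : Type) (x : A) (l : seq A) :
  List.In x l -> exists l1 l2, l = l1 ++ x :: l2.
Proof.
elim: l => [|y l IH] //= [<-|/IH [l1 [l2 ->]]]; first by exists [::], l.
by exists (y :: l1), l2.
Qed.

Lemma In_cat (A : Type) (x : A) (l1 l2 : seq A) :
  List.In x (l1 ++ l2) <-> List.In x l1 \/ List.In x l2.
Proof. exact: List.in_app_iff. Qed.

Section Points.
Variable T : finType.
Implicit Types (p q r : point T) (x y : T).

Lemma same_point_refl p : same_point p p.
Proof. by left. Qed.

Lemma same_point_sym p q : same_point p q -> same_point q p.
Proof.
case: p q => a b l [c d m]; rewrite /same_point /=.
move=> [[-> [-> ->]]|[[-> [-> ->]]|[x [px qx]]]].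
- by left.
- by right; left; do !split; lra.
- by right; right; exists x.
Qed.

Lemma is_vertex_inj p x y : is_vertex p x -> is_vertex p y -> x = y.
Proof.
case: p => a b l; rewrite /is_vertex /=.
by move=> [[-> <-]|[-> <-]] [[l0 <-]|[l1 <-]] //; lra.
Qed.

Lemma same_point_vertex p q x : same_point p q -> is_vertex p x -> is_vertex q x.
Proof.
case: p q => a b l [c d m]; rewrite /same_point /is_vertex /=.
move=> [[-> [-> ->]]|[[-> [-> ->]]|[y [py qy]]]] //.
- by move=> [[m0 ->]|[m1 ->]]; [right|left]; split => //; lra.
- by move=> px; rewrite -(@is_vertex_inj (Pt a b l) y x py px).
Qed.

Lemma same_point_trans p q r : same_point p q -> same_point q r -> same_point p r.
Proof.
move=> pq qr.
have via_vertex x : is_vertex q x -> same_point p r.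
  move=> qx; right; right; exists x; split.
  - exact: same_point_vertex (same_point_sym pq) qx.
  - exact: same_point_vertex qr qx.
case: (pq) => [E1|[E1|[x [_ qx]]]]; last exact: via_vertex qx.
all: case: (qr) => [E2|[E2|[x [qx _]]]]; try exact: via_vertex qx.
all: move: E1 E2; case: p q r {pq qr via_vertex} => a b l [c d m] [f g o] /=.
all: move=> [-> [-> ->]] [-> [-> ->]].
- by left.
- by right; left.
- by right; left.
- by left; rewrite /=; do !split; ring.
Qed.

Definition is_vertexb p x : bool :=
  (if Req_EM_T (pl p) 0 then pu p == x else false) ||
  (if Req_EM_T (pl p) 1 then pv p == x else false).

Lemma is_vertexP p x : reflect (is_vertex p x) (is_vertexb p x).
Proof.
rewrite /is_vertexb /is_vertex.
case: Req_EM_T => [l0|l0]; case: Req_EM_T => [l1|l1] /=; rewrite ?orbF; try lra.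
- apply: (iffP eqP) => [->|[[_ //]|[/l1 //]]]; by left.
- apply: (iffP eqP) => [->|[[/l0 //]|[_ //]]]; by right.
- by constructor=> [[[/l0]|[/l1]]].
Qed.

End Points.

Lemma filter_cons (A : Type) (a : pred A) x l :
  filter a (x :: l) = if a x then x :: filter a l else filter a l.
Proof. by []. Qed.

Section Lengths.
Variable T : finType.
Implicit Types (ws : seq (step T)) (P Q : pred (step T)).

Lemma step_len_ge0 (s : step T) : 0 <= step_len s.
Proof. exact: Rabs_pos. Qed.

Lemma walk_len_cons s ws : walk_len (s :: ws) = step_len s + walk_len ws.
Proof. by []. Qed.

Lemma walk_len_cat ws1 ws2 : walk_len (ws1 ++ ws2) = walk_len ws1 + walk_len ws2.
Proof.
elim: ws1 => [|s ws IH]; first by rewrite cat0s Rplus_0_l.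
by rewrite cat_cons !walk_len_cons IH; ring.
Qed.

Lemma walk_len_ge0 ws : 0 <= walk_len ws.
Proof.
elim: ws => [|s ws IH]; first exact: Rle_refl.
by rewrite walk_len_cons; have := step_len_ge0 s; lra.
Qed.

Lemma walk_len_filter_le P Q ws :
  (forall s, List.In s ws -> P s -> Q s) ->
  walk_len (filter P ws) <= walk_len (filter Q ws).
Proof.
elim: ws => [|s ws IH] PQ /=; first lra.
have {}IH := IH (fun s' ws_s' => PQ s' (or_intror ws_s')).
have := step_len_ge0 s.
case Ps: (P s); first rewrite (PQ s (or_introl erefl) Ps).
all: by case: (Q s); rewrite ?walk_len_cons; lra.
Qed.

Lemma walk_len_filterC P ws :
  walk_len ws = walk_len (filter P ws) + walk_len (filter (predC P) ws).
Proof.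
elim: ws => [|s ws IH] /=; first by rewrite /walk_len /=; ring.
by case: (P s); rewrite /= !walk_len_cons IH; ring.
Qed.

Lemma walk_len_filterU P Q ws :
  (forall s, List.In s ws -> ~~ (P s && Q s)) ->
  walk_len (filter (predU P Q) ws) = walk_len (filter P ws) + walk_len (filter Q ws).
Proof.
elim: ws => [|s ws IH] disjPQ; first by rewrite /= Rplus_0_l.
have {}IH := IH (fun s' ws_s' => disjPQ s' (or_intror ws_s')).
have := disjPQ s (or_introl erefl); rewrite !filter_cons [predU P Q s]/=.
by case: (P s); case: (Q s) => // _; rewrite ?walk_len_cons IH; ring.
Qed.

Definition max_steps (g : step T -> R) ws : R := foldr (fun s m => Rmax (g s) m) 0 ws.

Lemma max_steps_ub g ws s : List.In s ws -> g s <= max_steps g ws.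
Proof.
elim: ws => [|s' ws IH] //= [<-|ws_s]; first exact: Rmax_l.
exact: Rle_trans (IH ws_s) (Rmax_r _ _).
Qed.

Lemma max_steps_ge0 g ws : 0 <= max_steps g ws.
Proof. by elim: ws => [|s ws IH] /=; [lra | apply: Rle_trans IH (Rmax_r _ _)]. Qed.

Lemma max_steps_attained g ws :
  max_steps g ws = 0 \/ exists2 s, List.In s ws & max_steps g ws = g s.
Proof.
elim: ws => [|s ws IH] /=; first by left.
rewrite /Rmax; case: Rle_dec => _; last by right; exists s => //; left.
by case: IH => [->|[s' ws_s' ->]]; [left | right; exists s' => //; right].
Qed.

End Lengths.

Section Walks.
Variables (T : finType) (e : rel T).
Implicit Types (p q r : point T) (ws : seq (step T)).

Lemma walk_same_start p p' q ws :
  same_point p p' -> is_walk e p' q ws -> is_walk e p q ws.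
Proof.
case: ws => [|s ws] /=; first exact: same_point_trans.
by move=> pp' [s_ok [p's s_q]]; do !split => //; apply: same_point_trans pp' p's.
Qed.

Lemma walk_same_end p q q' ws :
  is_walk e p q ws -> same_point q q' -> is_walk e p q' ws.
Proof.
elim: ws p => [|s ws IH] p /=; first exact: same_point_trans.
by move=> [s_ok [ps s_q]] qq'; do !split => //; apply: IH.
Qed.

Lemma walk_cat p q r ws1 ws2 :
  is_walk e p q ws1 -> is_walk e q r ws2 -> is_walk e p r (ws1 ++ ws2).
Proof.
elim: ws1 p => [|s ws IH] p /=; first exact: walk_same_start.
by move=> [s_ok [ps s_q]] q_r; do !split => //; apply: IH q_r.
Qed.

Lemma walk_catP p r ws1 ws2 :
  is_walk e p r (ws1 ++ ws2) -> exists q, is_walk e p q ws1 /\ is_walk e q r ws2.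
Proof.
elim: ws1 p => [|s ws IH] p /=; first by exists p; split => //; apply: same_point_refl.
by move=> [s_ok [ps /IH [q [s_q q_r]]]]; exists q.
Qed.

Lemma walk_split_start p q l1 s l2 : is_walk e p q (l1 ++ s :: l2) ->
  is_walk e p (step_start s) l1 /\ is_walk e (step_start s) q (s :: l2).
Proof.
move=> /walk_catP [m [p_m m_q]]; have m_start : same_point m (step_start s) by case: m_q => _ [].
split; first exact: walk_same_end p_m m_start.
exact: walk_same_start (same_point_sym m_start) m_q.
Qed.

Lemma walk_split_end p q l1 s l2 : is_walk e p q (l1 ++ s :: l2) ->
  is_walk e p (step_end s) (l1 ++ [:: s]) /\ is_walk e (step_end s) q l2.
Proof.
rewrite -cat1s catA => /walk_catP [m [p_m m_q]].
have [m' [_ [_ [_ end_m]]]] := walk_catP p_m.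
by split; [apply: walk_same_end p_m (same_point_sym end_m) | apply: walk_same_start end_m m_q].
Qed.

Lemma walk_end_not_vertex p q ws : ws <> [::] -> is_walk e p q ws ->
  (forall s, List.In s ws -> forall x, ~ is_vertex (step_end s) x) -> forall x, ~ is_vertex q x.
Proof.
elim: ws p => [|s ws IH] p // _ /= [_ [_ s_q]] no_vertex x q_x.
case: ws IH s_q no_vertex => [|s' ws] IH s_q no_vertex.
  by apply: (no_vertex s (or_introl erefl) x); apply: same_point_vertex (same_point_sym s_q) q_x.
by apply: IH s_q (fun s'' ws_s'' => no_vertex s'' (or_intror ws_s'')) x q_x.
Qed.

Lemma walk_valid_step p q ws s : is_walk e p q ws -> List.In s ws -> valid_step e s.
Proof.
by elim: ws p => [|s' ws IH] p //= [s'_ok [_ s'_q]] [<-|ws_s] //; apply: IH s'_q ws_s.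
Qed.

Definition invariant_on (A : point T -> Prop) (f : point T -> R) :=
  forall p q, A p -> A q -> same_point p q -> f p = f q.

Definition step_lipschitz (P : pred (step T)) (f : point T -> R) :=
  forall s, Rabs (f (step_start s) - f (step_end s)) <= if P s then step_len s else 0.

Lemma walk_lipschitz A f P ws p q :
  invariant_on A f -> step_lipschitz P f -> is_walk e p q ws -> A p -> A q ->
  (forall s, List.In s ws -> A (step_start s) /\ A (step_end s)) ->
  Rabs (f p - f q) <= walk_len (filter P ws).
Proof.
move=> f_inv f_lip; elim: ws p => [|s ws IH] p /= pq Ap Aq Aws.
  by rewrite (f_inv p q) // Rminus_diag Rabs_R0; apply: Rle_refl.
case: pq => [_ [ps s_q]]; have [As_start As_end] := Aws s (or_introl erefl).
have -> : f p = f (step_start s) by apply: f_inv.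
have {}IH := IH _ s_q As_end Aq (fun s' ws_s' => Aws s' (or_intror ws_s')).
have := Rabs_triang (f (step_start s) - f (step_end s)) (f (step_end s) - f q).
have := f_lip s.
have -> : f (step_start s) - f (step_end s) + (f (step_end s) - f q) =
          f (step_start s) - f q by ring.
by case: (P s); rewrite ?walk_len_cons; lra.
Qed.

End Walks.

Section PointFunctions.
Variable T : finType.
Implicit Types (p q : point T) (a b v w x : T).

Definition nondegenerate p := pu p <> pv p.

Lemma invariant_on_nondegenerate (A : point T -> Prop) (f : point T -> R) (g : T -> R) :
  (forall p, A p -> nondegenerate p) ->
  (forall a b l, a <> b -> f (Pt a b l) = f (Pt b a (1 - l))) ->
  (forall p x, A p -> is_vertex p x -> f p = g x) ->
  invariant_on A f.
Proof.
move=> A_nd f_rev f_vertex p q Ap Aq [E|[E|[x [px qx]]]].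
- by case: p q E {Ap Aq} => a b l [c d m] /= [-> [-> ->]].
- have := A_nd p Ap; case: p q E {Ap Aq} => a b l [c d m] /= [-> [-> ->]] dc.
  by rewrite (f_rev d c (1 - m)) //; congr (f (Pt _ _ _)); ring.
- by rewrite (f_vertex p x) // (f_vertex q x).
Qed.

Definition on_edge p a b : bool :=
  ((pu p == a) && (pv p == b)) || ((pu p == b) && (pv p == a)).

Definition step_on (s : step T) a b : bool := on_edge (step_start s) a b.

Definition incident_to x (s : step T) : bool := (su s == x) || (sv s == x).

(* [vdist v p] is min(1, d(v, p)). *)
Definition vdist v p : R :=
  if pu p == v then pl p else if pv p == v then 1 - pl p else 1.

Lemma vdist_rev v a b l : a <> b -> vdist v (Pt a b l) = vdist v (Pt b a (1 - l)).
Proof.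
rewrite /vdist /= => ab; case: (a =P v) => av; case: (b =P v) => bv //; try ring.
by case: ab; rewrite av bv.
Qed.

Lemma vdist_vertex v p x :
  nondegenerate p -> is_vertex p x -> vdist v p = if x == v then 0 else 1.
Proof.
case: p => a b l; rewrite /nondegenerate /is_vertex /vdist /= => ab [[-> <-]|[-> <-]].
  by case: eqP => // _; case: eqP => // _; ring.
case: (a =P v) => [av|_]; case: (b =P v) => [bv|_] //; last ring.
by case: ab; rewrite av bv.
Qed.

Lemma vdist_invariant v : invariant_on nondegenerate (vdist v).
Proof.
apply: (invariant_on_nondegenerate (g := fun x => if x == v then 0 else 1)) => //.
- exact: vdist_rev.
- exact: vdist_vertex.
Qed.

Lemma vdist_lipschitz v : step_lipschitz predT (vdist v).
Proof.
move=> s; rewrite /vdist /step_len /=; case: eqP => _; first exact: Rle_refl.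
case: eqP => _; last by rewrite Rminus_diag Rabs_R0; apply: Rabs_pos.
by rewrite -Rabs_Ropp; apply: Req_le; congr Rabs; ring.
Qed.

(* [capped_dist v w t c p] is min(c, d(p, p(v,w,t))); the cap [c <= 1 - t] makes
   the route through [w] irrelevant. *)
Definition capped_dist v w t c p : R :=
  if on_edge p v w then Rmin (Rabs (vdist v p - t)) c else Rmin (t + vdist v p) c.

Lemma capped_dist_invariant v w t c : 0 <= t <= c -> c <= 1 - t ->
  invariant_on nondegenerate (capped_dist v w t c).
Proof.
move=> t_c c_t.
apply: (invariant_on_nondegenerate (g := fun x => if x == v then t else c)) => //.
  move=> a b l ab; rewrite /capped_dist -vdist_rev //.
  by rewrite /on_edge /= orbC (andbC (b == v)) (andbC (b == w)).
move=> p x p_nd px; rewrite /capped_dist (vdist_vertex v p_nd px).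
case: (x =P v) => _; case: on_edge.
- by rewrite Rminus_0_l Rabs_Ropp Rabs_right ?Rmin_left; lra.
- by rewrite Rmin_left; lra.
- by rewrite Rmin_right // Rabs_right; lra.
- by rewrite Rmin_right; lra.
Qed.

Lemma capped_dist_lipschitz v w t c : step_lipschitz predT (capped_dist v w t c).
Proof.
move=> s; have := vdist_lipschitz v s; rewrite /capped_dist /on_edge /=.
have Rmin_lip (x y : R) : Rabs (Rmin x c - Rmin y c) <= Rabs (x - y).
  by rewrite /Rmin; repeat case: Rle_dec; split_Rabs; lra.
by case: ifP => _ H; apply: Rle_trans (Rmin_lip _ _) _; split_Rabs; lra.
Qed.

Definition depth v w p : R :=
  if (pu p == w) && (pv p == v) then pl p
  else if (pu p == v) && (pv p == w) then 1 - pl p else 0.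

Lemma depth_vertex v w p x : nondegenerate p -> is_vertex p x -> x <> v -> depth v w p = 0.
Proof.
case: p => a b l; rewrite /nondegenerate /is_vertex /depth /= => ab [[-> <-]|[-> <-]] xv.
- case: (a =P w) => _; case: (b =P v) => _; case: (a =P v) => // _; ring.
- case: (a =P w) => _; case: (b =P v) => // _; case: (a =P v) => _; case: (b =P w) => //= _; ring.
Qed.

Lemma depth_lt1 v w p : 0 <= pl p <= 1 -> ~ is_vertex p v -> 0 <= depth v w p < 1.
Proof.
case: p => a b l; rewrite /depth /is_vertex /= => l01 not_v.
case: ifP => [/andP [_ /eqP bv]|_].
  split; first lra.
  by case: (Req_EM_T l 1) => [l1|]; [case: not_v; right | lra].
case: ifP => [/andP [/eqP av _]|_]; last lra.
split; first lra.
by case: (Req_EM_T l 0) => [l0|]; [case: not_v; left | lra].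
Qed.

Lemma depth_on_edge v w p : depth v w p <> 0 -> on_edge p v w.
Proof.
rewrite /depth /on_edge; case: ifP => [_ _|_]; first by rewrite orbT.
by case: ifP => // _ [].
Qed.

Lemma same_point_on_edge p q a b : same_point p q -> (forall x, ~ is_vertex p x) ->
  on_edge p a b -> on_edge q a b.
Proof.
move=> [E|[E|[x [px _]] /(_ x) //]] _; move: E; case: p q => a' b' l [c d m] /= [-> [-> _]] //.
by rewrite /on_edge /= => /orP [] /andP [-> ->]; rewrite ?orbT.
Qed.

Lemma on_edge_inj p a b c : a <> b -> on_edge p a b -> on_edge p a c -> b = c.
Proof.
case: p => x y l; rewrite /on_edge /= => ab.
by do 2!case/orP=> /andP [/eqP ? /eqP ?]; subst.
Qed.

Lemma depth_invariant v w : v <> w ->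
  invariant_on (fun p => nondegenerate p /\ ~ is_vertex p v) (depth v w).
Proof.
move=> vw; apply: (invariant_on_nondegenerate (g := fun _ => 0)) => [p [] //| |].
- move=> a b l ab; rewrite /depth /=.
  by case: (a =P w) => aw; case: (b =P v) => bv; case: (a =P v) => av; case: (b =P w) => bw;
    subst => //=; ring.
- move=> p x [p_nd p_v] px; apply: (depth_vertex w p_nd px) => xv.
  by apply: p_v; rewrite -xv.
Qed.

Lemma depth_lipschitz v w : step_lipschitz (fun s => step_on s v w) (depth v w).
Proof.
move=> s; rewrite /depth /step_on /on_edge /step_len /=.
case: (su s =P w) => _; case: (sv s =P v) => _; case: (su s =P v) => _; case: (sv s =P w) => _;
  rewrite /= ?Rminus_diag ?Rabs_R0; try lra.
all: try (rewrite -Rabs_Ropp; apply: Req_le; congr Rabs; ring).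
all: try (case: ifP => _; rewrite ?Rminus_diag ?Rabs_R0; lra).
all: try (have := Rabs_pos (sa s - sb s); lra).
Qed.

End PointFunctions.

Arguments nondegenerate {T} p.
Arguments incident_to {T} x s.

Section Graph.
Variables (T : finType) (e : rel T).
Hypothesis e_irr : irreflexive e.
Implicit Types (p q : point T) (ws : seq (step T)).

Lemma edge_neq a b : e a b -> a <> b.
Proof. by move=> ab a_b; rewrite a_b e_irr in ab. Qed.

Lemma tour_valid_step ws s : is_tour e ws -> List.In s ws -> valid_step e s.
Proof. by move=> [p [_ pp]]; apply: walk_valid_step pp. Qed.

Definition within_step (s : step T) tau := Rmin (sa s) (sb s) <= tau <= Rmax (sa s) (sb s).

Lemma delta_tour_near (delta : R) ws (f : point T -> R) :
  invariant_on nondegenerate f -> step_lipschitz predT f ->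
  delta_tour e delta ws -> forall p, valid_point e p ->
  exists s tau, [/\ List.In s ws, within_step s tau &
    Rabs (f p - f (Pt (su s) (sv s) tau)) <= delta].
Proof.
move=> f_inv f_lip [ws_tour ws_near] p p_ok.
have [q [[s [ws_s [tau [tau_s q_tau]]]] [ws0 [p_q ws0_len]]]] := ws_near p p_ok.
exists s, tau; split => //; apply: Rle_trans ws0_len; rewrite -(filter_predT ws0).
have [s_edge _] := tour_valid_step ws_tour ws_s.
apply: (walk_lipschitz f_inv f_lip (walk_same_end p_q q_tau)).
- by case: p_ok => /edge_neq.
- exact: edge_neq s_edge.
- by move=> s' /(walk_valid_step p_q) [/edge_neq s'_nd _].
Qed.

Fixpoint vertex_steps (x : T) (s : seq T) : seq (step T) :=
  if s is y :: s' then St x y 0 1 :: vertex_steps y s' else [::].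

Lemma vertex_steps_walk x s p q :
  path e x s -> is_vertex p x -> is_vertex q (last x s) -> is_walk e p q (vertex_steps x s).
Proof.
elim: s x p => [|y s IH] x p /=; first by move=> _ px qx; right; right; exists x.
move=> /andP [xy y_s] px qs; do !split => //=; try lra.
- by right; right; exists x; split => //; left.
- by apply: IH => //; right.
Qed.

Lemma vertex_steps_len x s : walk_len (vertex_steps x s) = INR (size s).
Proof.
elim: s x => [|y s IH] x //.
rewrite [vertex_steps _ _]/= walk_len_cons IH [size _]/= S_INR /step_len.
by rewrite /= Rminus_0_l Rabs_Ropp Rabs_R1 Rplus_comm.
Qed.

Lemma vertex_steps_cover x s y : s <> [::] -> y \in x :: s ->
  exists2 st, List.In st (vertex_steps x s) &
    [/\ sa st = 0, sb st = 1 & su st = y \/ sv st = y].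
Proof.
elim: s x => [|z s IH] x // _; rewrite in_cons => /orP [/eqP ->|s_y].
  by exists (St x z 0 1); [left | split => //; left].
case: s IH s_y => [|z' s] IH s_y.
  by move: s_y; rewrite mem_seq1 => /eqP ->; exists (St x z 0 1); [left | split => //; right].
by have [st ? ?] := IH z (ltac:(by [])) s_y; exists st => //; right.
Qed.

Fixpoint shuttle (v w : T) (d : R) (N : nat) : seq (step T) :=
  if N is N'.+1 then St v w 0 d :: St v w d 0 :: shuttle v w d N' else [::].

Lemma shuttle_walk v w d N : e v w -> 0 < d <= 1 ->
  is_walk e (Pt v w 0) (Pt v w 0) (shuttle v w d N).
Proof.
move=> vw d01; elim: N => [|N IH] /=; first exact: same_point_refl.
by do !split => //=; try lra; apply: same_point_refl.
Qed.

Lemma shuttle_len v w d N : 0 <= d -> walk_len (shuttle v w d N) = 2 * INR N * d.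
Proof.
move=> d_ge0; elim: N => [|N IH]; first by rewrite /= Rmult_0_r Rmult_0_l.
rewrite [shuttle _ _ _ _]/= !walk_len_cons IH S_INR /step_len /=.
by rewrite Rminus_0_l Rabs_Ropp Rminus_0_r Rabs_right; lra.
Qed.

Lemma shuttle_split x : 0 <= x -> exists N d, 0 < d <= 1 /\ 2 * INR N * d = x.
Proof.
case: (Req_EM_T x 0) => [-> _|x_neq0 x_ge0].
  by exists 0%nat, 1; split; [lra | rewrite /=; ring].
have [N x_N] := INR_unbounded x.
exists N, (x / (2 * INR N)); split; last by field; lra.
split; first by apply: Rdiv_lt_0_compat; lra.
apply: (Rmult_le_reg_r (2 * INR N)); first lra.
by rewrite /Rdiv Rmult_assoc Rinv_l; lra.
Qed.

Lemma dist_le_same_edge a b l c : e a b -> 0 <= l <= 1 -> 0 <= c <= 1 ->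
  dist_le e (Pt a b l) (Pt a b c) (Rabs (l - c)).
Proof.
move=> ab l01 c01; case: (Req_EM_T l c) => [<-|l_c].
  by exists [::]; split; [apply: same_point_refl | rewrite /walk_len /=; apply: Rabs_pos].
exists [:: St a b l c]; split; last by rewrite walk_len_cons Rplus_0_r; apply: Rle_refl.
by do !split => //; apply: same_point_refl.
Qed.

Lemma tsp_tour_half_tour v0 w s K : e v0 w -> TSP_tour e v0 s -> INR (TSP_len s) <= K ->
  exists ws, delta_tour e (1/2) ws /\ walk_len ws = K.
Proof.
move=> v0w [s_path [s_last s_all]]; rewrite /TSP_len => s_K.
have s_nil : s <> [::].
  by move=> s_nil; move: (s_all w); rewrite s_nil mem_seq1 => /eqP w_v0; rewrite w_v0 e_irr in v0w.
have [N [d [d01 Nd]]] := shuttle_split (ltac:(lra) : 0 <= K - INR (size s)).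
pose ws := shuttle v0 w d N ++ vertex_steps v0 s.
have ws_walk : is_walk e (Pt v0 w 0) (Pt v0 w 0) ws.
  apply: walk_cat (shuttle_walk N v0w d01) _.
  by apply: vertex_steps_walk => //; [left | rewrite s_last; left].
exists ws; split; last by rewrite walk_len_cat shuttle_len ?vertex_steps_len; lra.
split; first by exists (Pt v0 w 0); split => //; split => //=; lra.
have covers_vertex y q : is_vertex q y -> tour_covers ws q.
  move=> qy; have [st ws_st [st0 st1 st_y]] := vertex_steps_cover s_nil (s_all y).
  exists st; split; first by apply/In_cat; right.
  rewrite /step_covers st0 st1 Rmin_left ?Rmax_right; try lra.
  case: st_y => st_y; [exists 0 | exists 1]; split; try lra;
    right; right; exists y; split => //; [left|right]; split => //.
case=> a b l [/= ab l01].
case: (Rle_lt_dec l (1/2)) => l_half.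
- exists (Pt a b 0); split; first by apply: (covers_vertex a); left.
  have [ws0 [? ws0_len]] := dist_le_same_edge ab l01 (conj (Rle_refl 0) Rle_0_1).
  by exists ws0; split => //; move: ws0_len; rewrite Rminus_0_r Rabs_right; lra.
- exists (Pt a b 1); split; first by apply: (covers_vertex b); right.
  have [ws0 [? ws0_len]] := dist_le_same_edge ab l01 (conj Rle_0_1 (Rle_refl 1)).
  by exists ws0; split => //; move: ws0_len; rewrite Rabs_left1; lra.
Qed.

End Graph.

Section VertexWalk.
Variables (T : finType) (e : rel T).
Hypothesis e_sym : symmetric e.
Implicit Types (p q : point T) (s : step T) (ws : seq (step T)) (vis : pred T).

Definition step_touches s x := is_vertex (step_start s) x \/ is_vertex (step_end s) x.

Definition touched ws y : bool :=
  has (fun s => is_vertexb (step_start s) y || is_vertexb (step_end s) y) ws.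

Lemma touchedP ws y : reflect (exists2 s, List.In s ws & step_touches s y) (touched ws y).
Proof.
apply: (iffP (hasInP _ _)) => [] [s ws_s s_y]; exists s => //.
  by case/orP: s_y => /is_vertexP; [left|right].
by case: s_y => /is_vertexP ->; rewrite ?orbT.
Qed.

(* The state of the contraction: [p] lies on the edge [yz] at distance [r < 1] from the
   last vertex [y] of the vertex walk built so far. *)
Definition anchored p y z r := [/\ same_point p (Pt y z r), e y z & 0 <= r < 1].

Lemma anchored_vertex p y z r x : anchored p y z r -> is_vertex p x -> r = 0 /\ x = y.
Proof.
move=> [p_yz _ r01] /(same_point_vertex p_yz); rewrite /is_vertex /=.
by case=> [[-> ->]|[r1 _]] //; lra.
Qed.

Lemma step_from_anchor s y z r : valid_step e s -> anchored (step_start s) y z r ->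
  exists w b, [/\ e y w, 0 <= b <= 1, same_point (step_end s) (Pt y w b),
    step_len s = Rabs (r - b) & (0 < r -> w = z) /\ step_on s y w].
Proof.
case: s => a c s0 s1 [/= ac [s0_01 [s1_01 _]]] s_yzr.
have [fwd|bwd] : [/\ a = y, s0 = r & 0 < r -> c = z] \/ [/\ c = y, s0 = 1 - r & 0 < r -> a = z].
- case: (s_yzr) => [/same_point_sym [/= [-> [-> ->]]|[/= [-> [-> ->]]|[x [_ yzx]]]] _ _].
  + by left.
  + by right; split => //; ring.
  + have [r0 xy] := anchored_vertex s_yzr yzx; move: yzx; rewrite /is_vertex /= -xy r0.
    by case=> [[-> ->]|[-> ->]]; [left|right]; split => //; try ring; move/Rlt_irrefl.
- case: fwd => ay s0r cz; subst a s0; exists c, s1; split => //; first by left.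
  by split => //; rewrite /step_on /on_edge /= !eqxx.
- case: bwd => cy s0r az; subst c s0; exists a, (1 - s1); split; first by rewrite e_sym.
  + lra.
  + by right; left; do !split => /=; ring.
  + by rewrite /step_len /= -Rabs_Ropp; congr Rabs; ring.
  + by split => //; rewrite /step_on /on_edge /= !eqxx orbT.
Qed.

Definition step_within vis s : bool := vis (su s) && vis (sv s).

(* The part of the current edge already paid for by steps between touched vertices. *)
Definition progress vis y z r : R := if vis y && vis z then r else 0.

Lemma step_on_vis vis s y w : step_on s y w ->
  step_within vis s = vis y && vis w /\ vis (su s) || vis (sv s) = vis y || vis w.
Proof.
rewrite /step_on /on_edge /step_within /=.
by case/orP => /andP [/eqP -> /eqP ->]; rewrite // andbC orbC.
Qed.

Lemma anchored_step vis s y z r :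
  valid_step e s -> anchored (step_start s) y z r -> vis y ->
  (forall x, step_touches s x -> vis x) ->
  exists sl y' z' r', [/\ path e y sl, last y sl = y', anchored (step_end s) y' z' r' & vis y'] /\
    [/\ forall x, step_touches s x -> x \in y :: sl, vis (su s) || vis (sv s) &
     INR (size sl) + progress vis y' z' r' <=
       (if step_within vis s then step_len s else 0) + progress vis y z r].
Proof.
move=> s_ok s_yzr vis_y vis_s.
have [w [b [yw b01 s_ywb s_len [wz /(step_on_vis vis) [-> ->]]]]] := step_from_anchor s_ok s_yzr.
have start_y x : is_vertex (step_start s) x -> x = y by case/(anchored_vertex s_yzr).
have end_yw x : is_vertex (step_end s) x -> b = 0 /\ x = y \/ b = 1 /\ x = w.
  by move/(same_point_vertex s_ywb); rewrite /is_vertex /=; case=> [[-> <-]|[-> <-]]; [left|right].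
have [_ _ r01] := s_yzr.
have progress_r : vis w -> progress vis y z r = r.
  rewrite /progress vis_y => vis_w.
  case: (Rle_lt_or_eq_dec 0 r (proj1 r01)) => [/wz <-|<-]; first by rewrite vis_w.
  by rewrite if_same.
case: (Req_EM_T b 1) => [b1|b1].
- have end_w : is_vertex (step_end s) w.
    by apply: same_point_vertex (same_point_sym s_ywb) _; right.
  have vis_w := vis_s w (or_intror end_w).
  exists [:: w], w, y, 0; split; first split => //.
  + by rewrite /= yw.
  + split; [|by rewrite e_sym|lra].
    by right; right; exists w; split => //; left.
  split.
  + move=> x [/start_y ->|/end_yw [[b0 _]|[_ ->]]]; rewrite ?inE ?eqxx ?orbT //; lra.
  + by rewrite vis_y.
  + by rewrite /= progress_r // vis_y vis_w s_len b1 Rabs_left1 /progress ?if_same /=; lra.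
- exists [::], y, w, b; split; first by split => //; split => //; lra.
  split.
  + move=> x [/start_y ->|/end_yw [[_ ->]|[b1' _]]]; rewrite ?inE ?eqxx //; lra.
  + by rewrite vis_y.
  + rewrite /= Rplus_0_l {1}/progress vis_y s_len /=.
    case: ifP => vis_w; last by rewrite /progress vis_y; case: ifP; lra.
    by rewrite progress_r //; split_Rabs; lra.
Qed.

Lemma walk_vertex_walk vis ws p q y z r :
  is_walk e p q ws -> anchored p y z r -> vis y ->
  (forall s x, List.In s ws -> step_touches s x -> vis x) ->
  exists sl y' z' r', [/\ path e y sl, last y sl = y' & anchored q y' z' r'] /\
    [/\ forall s x, List.In s ws -> step_touches s x -> x \in y :: sl,
        forall s, List.In s ws -> vis (su s) || vis (sv s) &
        INR (size sl) + progress vis y' z' r' <=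
          walk_len (filter (step_within vis) ws) + progress vis y z r].
Proof.
elim: ws p y z r => [|s ws IH] p y z r /=.
  move=> pq [p_yzr yz r01] vis_y _; exists [::], y, z, r; split.
    by split => //; split => //; apply: same_point_trans (same_point_sym pq) p_yzr.
  by split => //; rewrite /= Rplus_0_l; apply: Rle_refl.
move=> [s_ok [ps s_q]] [p_yzr yz r01] vis_y vis_ws.
have s_yzr : anchored (step_start s) y z r.
  by split => //; apply: same_point_trans (same_point_sym ps) p_yzr.
have [sl1 [y1 [z1 [r1 [[sl1_path sl1_last s_y1 vis_y1] [s_sl1 vis_s s_cost]]]]]] :=
  anchored_step s_ok s_yzr vis_y (fun x => vis_ws s x (or_introl erefl)).
have [sl2 [y' [z' [r' [[sl2_path sl2_last q_y'] [ws_sl2 vis_ws' ws_cost]]]]]] :=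
  IH _ _ _ _ s_q s_y1 vis_y1 (fun s' x ws_s' => vis_ws s' x (or_intror ws_s')).
have y1_sl1 : y1 \in y :: sl1 by rewrite -sl1_last mem_last.
exists (sl1 ++ sl2), y', z', r'; split.
  by split => //; rewrite ?cat_path ?last_cat sl1_last ?sl1_path.
split.
- move=> s' x [<-|ws_s'] s'_x; rewrite -cat_cons mem_cat; first by rewrite s_sl1.
  have := ws_sl2 s' x ws_s' s'_x; rewrite inE => /orP [/eqP ->|->]; last by rewrite orbT.
  by rewrite y1_sl1.
- by move=> s' [<-|/vis_ws'].
- move: s_cost ws_cost; rewrite size_cat plus_INR.
  by case: ifP; rewrite ?walk_len_cons; lra.
Qed.

End VertexWalk.

Lemma seq_argmax (A : eqType) (g : A -> R) (l : seq A) x0 :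
  x0 \in l -> exists2 x, x \in l & forall y, y \in l -> g y <= g x.
Proof.
elim: l x0 => [|a l IH] x0 //= _; case: l IH => [|b l] IH.
  by exists a => [|y]; rewrite ?mem_seq1 // => /eqP ->; apply: Rle_refl.
have [x lx x_max] := IH b (mem_head _ _).
case: (Rle_lt_dec (g a) (g x)) => [ax|xa].
  by exists x => [|y]; rewrite in_cons ?lx ?orbT // => /orP [/eqP ->|/x_max].
exists a => [|y]; rewrite ?mem_head // in_cons => /orP [/eqP ->|/x_max]; lra.
Qed.

Section ClosedWalks.
Variables (T : finType) (e : rel T).

Lemma closed_walk_lipschitz (A : point T -> Prop) f P ws X s pt :
  invariant_on A f -> step_lipschitz P f -> is_walk e X X ws -> A X ->
  (forall s, List.In s ws -> A (step_start s) /\ A (step_end s)) ->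
  List.In s ws -> pt = step_start s \/ pt = step_end s ->
  2 * Rabs (f pt - f X) <= walk_len (filter P ws).
Proof.
move=> f_inv f_lip X_X AX A_ws ws_s pt_s.
have [l1 [l2 ws_l]] := In_split_cat ws_s.
have [ws1 [ws2 [ws_12 X_pt pt_X]]] :
    exists ws1 ws2, [/\ ws = ws1 ++ ws2, is_walk e X pt ws1 & is_walk e pt X ws2].
  move: X_X; rewrite ws_l; case: pt_s => -> X_X.
  - by have [] := walk_split_start X_X; exists l1, (s :: l2).
  - by have [] := walk_split_end X_X; exists (l1 ++ [:: s]), l2; rewrite -catA.
have A_pt : A pt by case: pt_s => ->; case: (A_ws s ws_s).
have A_sub ws' : (forall s', List.In s' ws' -> List.In s' ws) ->
    forall s', List.In s' ws' -> A (step_start s') /\ A (step_end s').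
  by move=> sub s' /sub /A_ws.
have := walk_lipschitz f_inv f_lip X_pt AX A_pt
  (A_sub ws1 (fun s' ws1_s' => ltac:(rewrite ws_12; apply/In_cat; left; exact: ws1_s'))).
have := walk_lipschitz f_inv f_lip pt_X A_pt AX
  (A_sub ws2 (fun s' ws2_s' => ltac:(rewrite ws_12; apply/In_cat; right; exact: ws2_s'))).
by rewrite ws_12 filter_cat walk_len_cat Rabs_minus_sym; lra.
Qed.

End ClosedWalks.

Section UntouchedVertex.
Variables (T : finType) (e : rel T).
Hypotheses (e_sym : symmetric e) (e_irr : irreflexive e).
Variables (ws : seq (step T)) (X : point T) (x0 v : T).
Hypothesis ws_half : delta_tour e (1/2) ws.
Hypothesis ws_closed : is_walk e X X ws.
Hypotheses (X_x0 : is_vertex X x0) (X_nd : nondegenerate X) (x0_v : x0 <> v).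
Hypothesis v_untouched : forall s, List.In s ws -> ~ step_touches s v.

Definition step_depth w s : R := Rmax (depth v w (step_start s)) (depth v w (step_end s)).

Definition max_depth w : R := max_steps (step_depth w) ws.

Lemma max_depth_ub w s : List.In s ws ->
  depth v w (step_start s) <= max_depth w /\ depth v w (step_end s) <= max_depth w.
Proof.
move=> /(max_steps_ub (step_depth w)) ub.
by split; apply: Rle_trans ub; [apply: Rmax_l | apply: Rmax_r].
Qed.

Lemma max_depth_ge0 w : 0 <= max_depth w.
Proof. exact: max_steps_ge0. Qed.

Lemma max_depth_attained w : max_depth w = 0 \/
  exists s pt, [/\ List.In s ws, pt = step_start s \/ pt = step_end s & max_depth w = depth v w pt].
Proof.
rewrite /max_depth.
case: (max_steps_attained (step_depth w) ws) => [->|[s ws_s ->]]; first by left.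
right; rewrite /step_depth /Rmax; case: Rle_dec => _.
- by exists s, (step_end s); split => //; right.
- by exists s, (step_start s); split => //; left.
Qed.

Lemma max_depth_lt1 w : max_depth w < 1.
Proof.
case: (max_depth_attained w) => [->|[s [pt [ws_s s_pt ->]]]]; first lra.
have [_ [s0 [s1 _]]] := walk_valid_step ws_closed ws_s.
have not_v : ~ is_vertex pt v by case: s_pt => -> pt_v; apply: (v_untouched ws_s); [left|right].
have pt01 : 0 <= pl pt <= 1 by case: s_pt => ->.
exact: (proj2 (depth_lt1 w pt01 not_v)).
Qed.

Lemma steps_avoid_v s : List.In s ws ->
  (nondegenerate (step_start s) /\ ~ is_vertex (step_start s) v) /\
  (nondegenerate (step_end s) /\ ~ is_vertex (step_end s) v).
Proof.
move=> ws_s; have [/(edge_neq e_irr) s_nd _] := walk_valid_step ws_closed ws_s.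
by split; split => // s_v; apply: (v_untouched ws_s); [left|right].
Qed.

Lemma max_depth_le_edge_len w : v <> w ->
  2 * max_depth w <= walk_len (filter (fun s => step_on s v w) ws).
Proof.
move=> vw; case: (max_depth_attained w) => [->|[s [pt [ws_s s_pt pt_max]]]].
  by rewrite Rmult_0_r; apply: walk_len_ge0.
have X_not_v : ~ is_vertex X v by move=> X_v; apply: x0_v; apply: is_vertex_inj X_x0 X_v.
have := closed_walk_lipschitz (depth_invariant vw) (depth_lipschitz v w) ws_closed
  (conj X_nd X_not_v) (fun s' ws_s' => steps_avoid_v ws_s') ws_s s_pt.
rewrite (depth_vertex w X_nd X_x0 x0_v) Rminus_0_r -pt_max.
by have := Rle_abs (max_depth w); lra.
Qed.

Lemma covered_vdist w s tau : v <> w -> List.In s ws -> within_step s tau ->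
  on_edge (Pt (su s) (sv s) tau) v w -> 1 - max_depth w <= vdist v (Pt (su s) (sv s) tau).
Proof.
move=> vw ws_s; have [] := max_depth_ub w ws_s.
case: s {ws_s} => a b s0 s1; rewrite /within_step /on_edge /depth /vdist /=.
have [wv' vw'] : (w == v) = false /\ (v == w) = false by split; apply/eqP => // /esym.
move=> D0 D1 s_tau.
case/orP => /andP [/eqP ? /eqP ?]; subst a b; rewrite !eqxx ?wv' ?vw' /= in D0 D1 *.
all: by move: s_tau; rewrite /Rmin /Rmax; repeat case: Rle_dec; lra.
Qed.

(* Otherwise the point of the edge [vw] at distance [(1 - max_depth w - r) / 2] from [v]
   is farther than 1/2 from the tour, as measured by [capped_dist]. *)
Lemma gap_le_max_depth w r : e v w -> 0 < r -> r <= 1 - max_depth w ->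
  (forall s tau, List.In s ws -> within_step s tau -> r <= vdist v (Pt (su s) (sv s) tau)) ->
  r <= max_depth w.
Proof.
move=> vw r_pos r_gap tour_far; have v_w := edge_neq e_irr vw.
case: (Rle_lt_dec r (max_depth w)) => // shallow; exfalso.
have D_ge0 := max_depth_ge0 w.
pose d := 1 - max_depth w; pose t := (d - r) / 2.
have [c [c_t c_d c_eq]] :
    exists c, [/\ c <= 1 - t, c <= (d + r) / 2 & c = 1 - t \/ c = (d + r) / 2].
  by exists (Rmin (1 - t) ((d + r) / 2)); rewrite /Rmin; case: Rle_dec; split => //; lra.
have t_c : 0 <= t <= c by rewrite /t /d in c_eq *; lra.
have vwt_ok : valid_point e (Pt v w t) by split => //=; rewrite /t /d; lra.
have [s [tau [ws_s s_tau near]]] := delta_tour_near e_irr (capped_dist_invariant v w t_c c_t)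
  (capped_dist_lipschitz v w t c) ws_half vwt_ok.
have at_vwt : capped_dist v w t c (Pt v w t) = 0.
  by rewrite /capped_dist /on_edge /vdist /= !eqxx /= Rminus_diag Rabs_R0 Rmin_left; lra.
have far : c <= capped_dist v w t c (Pt (su s) (sv s) tau).
  have := tour_far s tau ws_s s_tau; rewrite /capped_dist; case: ifP => s_vw far_v.
  - have := covered_vdist v_w ws_s s_tau s_vw; rewrite -/d => near_v.
    by rewrite Rmin_right //; split_Rabs; rewrite /t in c_d *; lra.
  - by rewrite Rmin_right // /t; lra.
by move: near; rewrite at_vwt Rminus_0_l Rabs_Ropp; split_Rabs; rewrite /t /d in c_eq; lra.
Qed.

(* With [w1] the neighbour the tour penetrates deepest and [r = 1 - max_depth w1] the
   distance from [v] to the tour, [gap_le_max_depth] gives [max_depth w2 >= r]. *)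
Lemma untouched_max_depths : (1 < #|[pred w | e v w]|)%nat ->
  exists w1 w2, [/\ e v w1, e v w2, w1 != w2, 0 < max_depth w1 &
    1 <= max_depth w1 + max_depth w2].
Proof.
move=> /card_gt1P [a [b [va vb ab]]].
have a_nbrs : a \in enum [pred w | e v w] by rewrite mem_enum.
have [w1 w1_nbr w1_max] := seq_argmax max_depth a_nbrs.
rewrite mem_enum in w1_nbr.
have [w2 vw2 w12] : exists2 w2, e v w2 & w1 != w2.
  by case: (w1 =P a) => [->|/eqP w1a]; [exists b | exists a].
have nbr_max w : e v w -> max_depth w <= max_depth w1.
  by move=> vw; apply: w1_max; rewrite mem_enum.
have tour_far s tau : List.In s ws -> within_step s tau ->
    1 - max_depth w1 <= vdist v (Pt (su s) (sv s) tau).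
  move=> ws_s s_tau; have [s_edge _] := walk_valid_step ws_closed ws_s.
  have via_nbr w : e v w -> on_edge (Pt (su s) (sv s) tau) v w ->
      1 - max_depth w1 <= vdist v (Pt (su s) (sv s) tau).
    move=> vw s_vw; have := covered_vdist (edge_neq e_irr vw) ws_s s_tau s_vw.
    by have := nbr_max w vw; lra.
  case: (su s =P v) => [su_v|/eqP su_v].
    by apply: (via_nbr (sv s)); rewrite -?su_v // /on_edge /= su_v !eqxx.
  case: (sv s =P v) => [sv_v|/eqP sv_v].
    by apply: (via_nbr (su s)); rewrite 1?e_sym -?sv_v // /on_edge /= sv_v !eqxx orbT.
  rewrite /vdist /= (negbTE su_v) (negbTE sv_v); have := max_depth_ge0 w1; lra.
have r_pos : 0 < 1 - max_depth w1 by have := max_depth_lt1 w1; lra.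
have r_w2 : 1 - max_depth w1 <= 1 - max_depth w2.
  have := nbr_max w2 vw2; have := max_depth_ge0 w1; lra.
have := gap_le_max_depth vw2 r_pos r_w2 tour_far; have := nbr_max w2 vw2.
by exists w1, w2; split => //; lra.
Qed.

Lemma untouched_vertex_cost : (1 < #|[pred w | e v w]|)%nat ->
  2 <= walk_len (filter (incident_to v) ws).
Proof.
move=> /untouched_max_depths [w1 [w2 [vw1 vw2 /eqP w12 _ depths]]].
have := max_depth_le_edge_len (edge_neq e_irr vw1).
have := max_depth_le_edge_len (edge_neq e_irr vw2).
have disjoint s : List.In s ws -> ~~ (step_on s v w1 && step_on s v w2).
  by move=> _; apply/andP => [[/on_edge_inj s_vw1 /s_vw1 w1w2]]; apply/w12/w1w2/edge_neq.
have union_le : walk_len (filter (predU (fun s => step_on s v w1) (fun s => step_on s v w2)) ws)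
    <= walk_len (filter (incident_to v) ws).
  apply: walk_len_filter_le => s _; rewrite /incident_to.
  by case/orP; rewrite /step_on /on_edge /= => /orP [] /andP [/eqP -> /eqP ->]; rewrite eqxx ?orbT.
rewrite walk_len_filterU // in union_le; lra.
Qed.

Lemma untouched_vertex_neighbor : (1 < #|[pred w | e v w]|)%nat ->
  exists w s, [/\ e v w, List.In s ws & step_on s v w].
Proof.
move=> /untouched_max_depths [w [_ [vw _ _ deep _]]].
case: (max_depth_attained w) => [|[s [pt [ws_s s_pt pt_max]]]]; first lra.
exists w, s; split => //.
have : on_edge pt v w by apply: depth_on_edge; lra.
by case: s_pt => ->.
Qed.

End UntouchedVertex.

Section Detours.
Variables (T : finType) (e : rel T).
Hypothesis e_sym : symmetric e.

Lemma closed_walk_detour x s w u : path e x s -> last x s = x -> w \in x :: s -> e w u ->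
  exists s', [/\ path e x s', last x s' = x, size s' = (size s).+2,
    {subset x :: s <= x :: s'} & u \in x :: s'].
Proof.
move=> s_path s_last s_w wu; have uw : e u w by rewrite e_sym.
case/orP: s_w => [/eqP w_x|s_w].
  subst w; exists [:: u, x & s]; split => //=; first by rewrite wu uw s_path.
  - by move=> y; rewrite !inE => /orP [->|->]; rewrite ?orbT.
  - by rewrite !inE eqxx orbT.
case/splitPr: s_w s_path s_last => s1 s2 s_path s_last.
exists (s1 ++ [:: w, u, w & s2]); split.
- by move: s_path; rewrite !cat_path /= wu uw.
- by move: s_last; rewrite !last_cat.
- by rewrite !size_cat /= !addnS.
- by move=> y; rewrite !inE !mem_cat !inE => /or3P [->|->|/orP [->|->]]; rewrite ?orbT.
- by rewrite !inE mem_cat !inE eqxx !orbT.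
Qed.

Lemma detours_cover x s (U : seq T) :
  path e x s -> last x s = x -> (forall u, u \in U -> exists2 w, w \in x :: s & e w u) ->
  exists s', [/\ path e x s', last x s' = x, size s' = (size s + 2 * size U)%nat,
    {subset x :: s <= x :: s'} & {subset U <= x :: s'}].
Proof.
move=> s_path s_last; elim: U => [|u U IH] U_nbr.
  by exists s; split => //; rewrite muln0 addn0.
have [s' [s'_path s'_last s'_size s_s' U_s']] :=
  IH (fun u' U_u' => U_nbr u' (ltac:(by rewrite inE U_u' orbT))).
have [w s_w wu] := U_nbr u (mem_head _ _).
have [s'' [s''_path s''_last s''_size s'_s'' u_s'']] :=
  closed_walk_detour s'_path s'_last (s_s' _ s_w) wu.
exists s''; split => //.
- by rewrite s''_size s'_size /= mulnS addnCA add2n.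
- by move=> y /s_s' /s'_s''.
- by move=> y; rewrite inE => /orP [/eqP ->|/U_s' /s'_s''].
Qed.

End Detours.

Lemma untouched_cost_sum (T : finType) (vis : pred T) (ws : seq (step T)) (U : seq T) :
  uniq U -> (forall u, u \in U -> ~~ vis u) ->
  (forall s, List.In s ws -> vis (su s) || vis (sv s)) ->
  (forall u, u \in U -> 2 <= walk_len (filter (incident_to u) ws)) ->
  2 * INR (size U) <= walk_len (filter (predC (step_within vis)) ws).
Proof.
move=> U_uniq U_vis ws_vis U_cost.
suff : 2 * INR (size U) <= walk_len (filter (fun s => has (incident_to^~ s) U) ws).
  move/Rle_trans; apply; apply: walk_len_filter_le => s _ /hasP [u /U_vis u_vis].
  by rewrite /= /step_within => /orP [] /eqP ->; rewrite (negbTE u_vis) ?andbF.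
elim: U U_uniq U_vis U_cost => [|u U IH] U_uniq U_vis U_cost.
  by rewrite Rmult_0_r; apply: walk_len_ge0.
move: U_uniq; rewrite cons_uniq => /andP [u_U U_uniq].
have U_sub u' : u' \in U -> u' \in u :: U by rewrite inE => ->; rewrite orbT.
rewrite (eq_filter (a2 := predU (incident_to u) (fun s => has (incident_to^~ s) U))) //.
rewrite walk_len_filterU; last first.
  move=> s ws_s; apply/andP => [[s_u /hasP [u' U_u' s_u']]].
  have u_u' : u != u' by apply: contraNneq u_U => ->.
  have [vis_u vis_u'] := (U_vis u (mem_head _ _), U_vis u' (U_sub _ U_u')).
  move: (ws_vis s ws_s); rewrite /incident_to in s_u s_u'.
  case/orP: s_u => /eqP s_u; case/orP: s_u' => /eqP s_u'.
  - by move: u_u'; rewrite -s_u -s_u' eqxx.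
  - by rewrite s_u s_u' (negbTE vis_u) (negbTE vis_u').
  - by rewrite s_u s_u' (negbTE vis_u) (negbTE vis_u').
  - by move: u_u'; rewrite -s_u -s_u' eqxx.
rewrite [size _]/= S_INR.
have := U_cost u (mem_head _ _).
have := IH U_uniq (fun u' U_u' => U_vis u' (U_sub _ U_u'))
  (fun u' U_u' => U_cost u' (U_sub _ U_u')).
lra.
Qed.

Section HalfTourFromVertex.
Variables (T : finType) (e : rel T).
Hypotheses (e_sym : symmetric e) (e_irr : irreflexive e).
Hypothesis deg_gt1 : forall v : T, (1 < #|[pred w | e v w]|)%nat.
Variables (ws : seq (step T)) (X : point T) (x0 : T).
Hypotheses (ws_half : delta_tour e (1/2) ws) (ws_closed : is_walk e X X ws).
Hypotheses (X_x0 : is_vertex X x0) (X_nd : nondegenerate X).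

Lemma touched_steps s x : List.In s ws -> step_touches s x -> touched ws x.
Proof. by move=> ws_s s_x; apply/touchedP; exists s. Qed.

Lemma X_anchored : exists z0, anchored e X x0 z0 0.
Proof.
have /card_gt0P [z0 x0z0] := ltnW (deg_gt1 x0).
by exists z0; split => //; [right; right; exists x0; split => //; left | lra].
Qed.

Lemma touched_x0 : touched ws x0.
Proof.
have [z0 [_ x0z0 _]] := X_anchored.
have [q [[s [ws_s _]] _]] := ws_half.2 (Pt x0 z0 0) (conj x0z0 (conj (Rle_refl 0) Rle_0_1)).
case ws_eq : ws ws_closed ws_s => [//|s1 ws'] [_ [X_s1 _]] _.
apply/touchedP; exists s1; first by left.
by left; apply: same_point_vertex X_s1 X_x0.
Qed.

Lemma touched_closed_walk : exists sl, [/\ path e x0 sl, last x0 sl = x0,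
  forall y, touched ws y -> y \in x0 :: sl &
  INR (size sl) <= walk_len (filter (step_within (touched ws)) ws)].
Proof.
have [z0 X_anchor] := X_anchored.
have [sl [y' [z' [r' [[sl_path sl_last X_y'] [ws_sl _ sl_len]]]]]] :=
  walk_vertex_walk e_sym ws_closed X_anchor touched_x0 touched_steps.
have [r'0 x0y'] := anchored_vertex X_y' X_x0.
exists sl; split => //; first by rewrite sl_last.
- by move=> y /touchedP [s ws_s /(ws_sl s y ws_s)].
- by move: sl_len; rewrite r'0 /progress !if_same !Rplus_0_r.
Qed.

Lemma steps_touch_endpoint s : List.In s ws -> touched ws (su s) || touched ws (sv s).
Proof.
have [z0 X_anchor] := X_anchored.
have [sl [y' [z' [r' [_ [_ ws_touched _]]]]]] :=
  walk_vertex_walk e_sym ws_closed X_anchor touched_x0 touched_steps.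
exact: ws_touched.
Qed.

Lemma untouched_avoided u : ~~ touched ws u -> forall s, List.In s ws -> ~ step_touches s u.
Proof. by move=> /touchedP u_untouched s ws_s s_u; apply: u_untouched; exists s. Qed.

Lemma untouched_cost u : ~~ touched ws u -> 2 <= walk_len (filter (incident_to u) ws).
Proof.
move=> u_untouched; have x0_u : x0 <> u by move=> x0_u; rewrite -x0_u touched_x0 in u_untouched.
exact: (untouched_vertex_cost e_sym e_irr ws_half ws_closed X_x0 X_nd x0_u
  (untouched_avoided u_untouched) (deg_gt1 u)).
Qed.

Lemma untouched_touched_neighbor u : ~~ touched ws u -> exists2 w, touched ws w & e w u.
Proof.
move=> u_untouched; have [w [s [uw ws_s s_uw]]] := untouched_vertex_neighbor e_sym e_irr
  ws_half ws_closed (untouched_avoided u_untouched) (deg_gt1 u).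
exists w; last by rewrite e_sym.
move: s_uw (steps_touch_endpoint ws_s); rewrite /step_on /on_edge /=.
by case/orP => /andP [/eqP -> /eqP ->]; rewrite (negbTE u_untouched) ?orbF.
Qed.

Lemma half_tour_from_vertex : exists s, TSP_tour e x0 s /\ INR (size s) <= walk_len ws.
Proof.
have [sl [sl_path sl_last sl_touched sl_len]] := touched_closed_walk.
pose U := [seq u <- enum T | ~~ touched ws u].
have U_untouched u : u \in U -> ~~ touched ws u by rewrite mem_filter => /andP [].
have U_len : 2 * INR (size U) <= walk_len (filter (predC (step_within (touched ws))) ws).
  apply: (untouched_cost_sum (filter_uniq _ (enum_uniq T)) U_untouched).
  - exact: steps_touch_endpoint.
  - by move=> u /U_untouched; apply: untouched_cost.
have U_nbr u : u \in U -> exists2 w, w \in x0 :: sl & e w u.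
  by move=> /U_untouched /untouched_touched_neighbor [w /sl_touched]; exists w.
have [s [s_path s_last s_size sl_s U_s]] := detours_cover e_sym sl_path sl_last U_nbr.
exists s; split.
  do 2!split => //; move=> y; case touched_y: (touched ws y).
  - exact/sl_s/sl_touched.
  - by apply: U_s; rewrite mem_filter touched_y mem_enum.
rewrite s_size plus_INR mult_INR (walk_len_filterC (step_within (touched ws)) ws) /=.
lra.
Qed.

End HalfTourFromVertex.

Section HalfTourToTsp.
Variables (T : finType) (e : rel T).
Hypotheses (e_sym : symmetric e) (e_irr : irreflexive e).
Hypothesis deg_gt1 : forall v : T, (1 < #|[pred w | e v w]|)%nat.
Implicit Types (ws : seq (step T)).

Lemma walk_stays_on_edge p q ws a b : is_walk e p q ws -> (forall x, ~ is_vertex p x) ->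
  on_edge p a b -> (forall s, List.In s ws -> forall x, ~ is_vertex (step_end s) x) ->
  forall s, List.In s ws -> step_on s a b.
Proof.
elim: ws p => [|s ws IH] p //= [_ [ps s_q]] p_nv p_ab no_vertex s' [<-|ws_s'].
  exact: same_point_on_edge ps p_nv p_ab.
apply: IH s_q _ _ _ s' ws_s' => [x||s'' ws_s'']; first exact: no_vertex s (or_introl erefl) x.
  exact: same_point_on_edge ps p_nv p_ab.
exact: no_vertex s'' (or_intror ws_s'').
Qed.

(* Otherwise the tour never leaves one edge [ab], and a neighbour [c != b] of [a] is at
   distance 1 from it. *)
Lemma half_tour_meets_vertex ws : delta_tour e (1/2) ws ->
  exists2 s, List.In s ws & exists x, is_vertex (step_end s) x.
Proof.
move=> ws_half.
have [|no_vertex] := boolP (has (fun s => [exists x, is_vertexb (step_end s) x]) ws).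
  by case/hasInP => s ws_s /existsP [x /is_vertexP s_x]; exists s => //; exists x.
exfalso; have [[[a b l] [p0_ok p0_walk]] ws_near] := ws_half.
have ends_nv s : List.In s ws -> forall x, ~ is_vertex (step_end s) x.
  move=> ws_s x /is_vertexP s_x; move/hasInP: no_vertex; apply.
  by exists s => //; apply/existsP; exists x.
have ws_cons : ws <> [::].
  by move=> ws_nil; have [q [[s [ws_s _]] _]] := ws_near _ p0_ok; rewrite ws_nil in ws_s.
have p0_nv := walk_end_not_vertex ws_cons p0_walk ends_nv.
have p0_ab : on_edge (Pt a b l) a b by rewrite /on_edge /= !eqxx.
have ws_ab := walk_stays_on_edge p0_walk p0_nv p0_ab ends_nv.
have [c ac cb] : exists2 c, e a c & c != b.
  have /card_gt1P [c [c' [ac ac' cc']]] := deg_gt1 a.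
  by case: (c =P b) => [cb|/eqP cb]; [exists c'; rewrite // -cb eq_sym | exists c].
have ca : a != c by apply/eqP => ac'; rewrite ac' e_irr in ac.
have ca_ok : valid_point e (Pt c a 0) by split; [rewrite /= e_sym | rewrite /=; lra].
have [s [tau [ws_s _ near]]] :=
  delta_tour_near e_irr (vdist_invariant c) (vdist_lipschitz c) ws_half ca_ok.
move: (ws_ab s ws_s) near; rewrite /vdist /step_on /on_edge /= eqxx.
have [ac_f bc_f] : (a == c) = false /\ (b == c) = false by rewrite (negbTE ca) eq_sym (negbTE cb).
by case/orP => /andP [/eqP -> /eqP ->]; rewrite ac_f bc_f; split_Rabs; lra.
Qed.

Lemma half_tour_to_tsp ws : delta_tour e (1/2) ws ->
  exists v0 s, TSP_tour e v0 s /\ INR (size s) <= walk_len ws.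
Proof.
move=> ws_half; have [s ws_s [x s_x]] := half_tour_meets_vertex ws_half.
have [[p0 [p0_ok p0_walk]] ws_near] := ws_half.
have [l1 [l2 ws_l]] := In_split_cat ws_s.
have [p0_end end_p0] : is_walk e p0 (step_end s) (l1 ++ [:: s]) /\ is_walk e (step_end s) p0 l2.
  by apply: walk_split_end; rewrite -ws_l.
pose ws' := l2 ++ (l1 ++ [:: s]).
have ws'_ws s' : List.In s' ws' <-> List.In s' ws.
  by rewrite ws_l /ws' -[s :: l2]cat1s !In_cat; tauto.
have [s_edge _] := walk_valid_step p0_walk ws_s.
have end_ok : valid_point e (step_end s) by case: (walk_valid_step p0_walk ws_s) => ? [? []].
have ws'_half : delta_tour e (1/2) ws'.
  split; first by exists (step_end s); split => //; apply: walk_cat end_p0 p0_end.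
  move=> p p_ok; have [q [[s' [ws_s' s'_q]] p_q]] := ws_near p p_ok.
  by exists q; split => //; exists s'; split => //; apply/ws'_ws.
have [sl [sl_tsp sl_len]] :=
  half_tour_from_vertex e_sym e_irr deg_gt1 ws'_half (walk_cat end_p0 p0_end) s_x
    (edge_neq e_irr s_edge).
exists x, sl; split => //; move: sl_len.
rewrite /ws' ws_l !walk_len_cat !walk_len_cons.
by rewrite [walk_len [::]]/= Rplus_0_r; lra.
Qed.

End HalfTourToTsp.

Theorem mainTheorem15 (T : finType) (e : rel T)
  (Hsimple : simple_graph e) (Hcubic : cubic e) (Hbip : bipartite e)
  (Hconn : connected_graph e) (K : R) :
  (exists (v0 : T) (s : seq T), TSP_tour e v0 s /\ (INR (TSP_len s) <= K)%R) <->
  (exists ws : seq (step T), delta_tour e (1/2)%R ws /\ walk_len ws = K).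
Proof.
case: Hsimple => e_sym e_irr.
have deg_gt1 v : (1 < #|[pred w | e v w]|)%nat by rewrite Hcubic.
split.
- move=> [v0 [s [s_tsp s_K]]].
  have /card_gt0P [w v0w] := ltnW (deg_gt1 v0).
  exact: (tsp_tour_half_tour e_irr v0w s_tsp s_K).
- move=> [ws [ws_half <-]].
  exact: (half_tour_to_tsp e_sym e_irr deg_gt1 ws_half).
Qed.
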